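(* Let $f$ be a piecewise contracting interval map satisfying the separation property, let $x\in\widetilde X$ and let $\theta$ be its itinerary. Then there exist $m_0\geqslant 1$ and a number $\beta(x)$ such that \[ p(\theta,n)=n\,\#\Delta_{lr}(x)+\beta(x)\qquad\forall\, n\geqslant m_0, \] and \[ p(\theta,1)-\#\Delta_{lr}(x)\leqslant\beta(x)\leqslant p(\theta,1)-\#\Delta+m_0\big(\#\Delta-\#\Delta_{lr}(x)\big). \]
   Context: Let $X$ be a compact interval of $\mathbb{R}$ and $X_1<X_2<\dots<X_N$ ($N\geqslant 2$) be non-empty pairwise disjoint intervals, open in $X$, with $X=\bigcup_{i}\overline{X_i}$. Let $\Delta:=\{x\in\overline{X_i}\cap\overline{X_j}: i\neq j\}$; so $\Delta=\{c_1,\dots,c_{N-1}\}$ with $\{c_i\}=\overline{X_i}\cap\overline{X_{i+1}}$. A piecewise contracting interval map is a map $f:X\to X$ discontinuous at every point of $\Delta$ for which there is $\lambda\in(0,1)$ with $|f(x)-f(y)|\leqslant\lambda|x-y|$ whenever $x,y$ lie in the same $X_i$; let $f_i:\overline{X_i}\to X$ be the continuous extension of $f|_{X_i}$. Separation property: each $f_i$ is injective and $f_i(\overline{X_i})\cap f_j(\overline{X_j})=\emptyset$ for $i\neq j$. $\widetilde X:=\bigcap_{n\geqslant 0}f^{-n}(X\setminus\Delta)$ (assumed non-empty); the itinerary of $x\in\widetilde X$ is $\theta\in\{1,\dots,N\}^{\mathbb{N}}$ with $\theta_t=i$ iff $f^t(x)\in X_i$. $L_n(\theta):=\{\theta_t\dots\theta_{t+n-1}:t\geqslant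 0\}$, $p(\theta,n):=\#L_n(\theta)$. Atoms: for $A\subset X$ let $F_i(A):=\overline{f(A\cap X_i)}$; for $(i_1,\dots,i_n)\in\{1,\dots,N\}^n$ the set $A_{i_1\dots i_n}:=F_{i_n}\circ\dots\circ F_{i_1}(X)$ is an atom of generation $n$ if it is non-empty; $\mathcal{A}_n$ is the set of atoms of generation $n$, and for $x\in X$, $\mathcal{A}_n(x):=\{A\in\mathcal{A}_n:\exists t\in\mathbb{N},\ f^{t+n}(x)\in A\}$. For $c=c_i\in\Delta$ and $n\geqslant 1$, $c$ is $n$-left-right visited by the orbit of $x$ if there exists $A\in\mathcal{A}_n(x)$ with $c\in A$, such that $f^{t+n}(x)\in A\cap X_i$ for some $t\in\mathbb{N}$ and $f^{t'+n}(x)\in A\cap X_{i+1}$ for some $t'\in\mathbb{N}$. $\Delta^n_{lr}(x)$ is the set of such discontinuities, and $\Delta_{lr}(x):=\bigcap_{n\geqslant1}\Delta^n_{lr}(x)$ (the discontinuities that are left-right recurrently visited). *)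

From HB Require Import structures.
From mathcomp Require Import all_boot all_order all_algebra.
From mathcomp Require Import all_classical all_reals all_analysis.



Unset Printing Implicit Defensive.

Import Order.TTheory GRing.Theory Num.Theory.
Import numFieldNormedType.Exports.
Local Open Scope classical_set_scope.
Local Open Scope ring_scope.

(* Pieces are indexed by i : 'I_N (0-indexed; paper's X_{i+1} is our piece i):
   piece 0 = [c 0, c 1), piece i = (c i, c (i+1)) for 0 < i < N-1,
   piece (N-1) = (c (N-1), c N].
   Discontinuity set Delta = {c k | 0 < k < N}; c k lies between
   piece (k-1) and piece k. *)

Definition Xspace {R : realType} (c : nat -> R) (N : nat) : set R :=
  `[c 0%N, c N].

Definition piece {R : realType} (c : nat -> R) (N : nat) (i : nat) : set R :=
  [set y | (if i == 0%N then c 0%N <= y else c i < y) /\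
           (if i.+1 == N then y <= c N else y < c i.+1)].

Definition in_Delta {R : realType} (c : nat -> R) (N : nat) (y : R) : Prop :=
  exists k : nat, [/\ (0 < k)%N, (k < N)%N & y = c k].

Definition piecewise_contracting {R : realType} (c : nat -> R) (N : nat)
    (f : R -> R) : Prop :=
  [/\ (forall y, Xspace c N y -> Xspace c N (f y)),
      (forall k : nat, (0 < k)%N -> (k < N)%N ->
         ~ continuous_at (c k) f) &
      (exists lambda : R, [/\ 0 < lambda, lambda < 1 &
         forall (i : 'I_N) (y z : R), piece c N i y -> piece c N i z ->
           `|f y - f z| <= lambda * `|y - z|])].

(* f_i : the continuous extension of f restricted to piece i, to its
   closure [c i, c (i+1)] (unique since the piece is dense in its closure). *)
Definition is_cont_ext {R : realType} (c : nat -> R) (N : nat)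
    (f : R -> R) (i : 'I_N) (g : R -> R) : Prop :=
  {within `[c i, c i.+1], continuous g} /\
  (forall y, piece c N i y -> g y = f y).

Definition separation {R : realType} (c : nat -> R) (N : nat)
    (f : R -> R) : Prop :=
  exists fi : 'I_N -> R -> R,
    [/\ (forall i, is_cont_ext c N f i (fi i)),
        (forall (i : 'I_N) (y z : R), `[c i, c i.+1]%classic y -> `[c i, c i.+1]%classic z ->
            fi i y = fi i z -> y = z) &
        (forall i j : 'I_N, i != j ->
            (fi i @` `[c i, c i.+1]) `&` (fi j @` `[c j, c j.+1]) = set0)].

Definition in_Xtilde {R : realType} (c : nat -> R) (N : nat)
    (f : R -> R) (x : R) : Prop :=
  forall n : nat, Xspace c N (iter n f x) /\ ~ in_Delta c N (iter n f x).

Definition is_itinerary {R : realType} (c : nat -> R) (N : nat)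
    (f : R -> R) (x : R) (theta : nat -> 'I_N) : Prop :=
  forall t : nat, piece c N (theta t) (iter t f x).

Definition complexity (N : nat) (theta : nat -> 'I_N) (n : nat) : nat :=
  #|[set w : n.-tuple 'I_N |
      `[< exists t : nat, forall j : 'I_n, theta (t + j)%N = tnth w j >]]|.

Definition Fop {R : realType} (c : nat -> R) (N : nat) (f : R -> R)
    (i : nat) (A : set R) : set R :=
  closure (f @` (A `&` piece c N i)).

Definition atom {R : realType} (c : nat -> R) (N : nat) (f : R -> R)
    (w : seq 'I_N) : set R :=
  foldl (fun A (i : 'I_N) => Fop c N f i A) (Xspace c N) w.

Definition is_atom {R : realType} (c : nat -> R) (N : nat) (f : R -> R)
    (n : nat) (A : set R) : Prop :=
  exists w : n.-tuple 'I_N, atom c N f w = A /\ A !=set0.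

Definition atom_of_orbit {R : realType} (c : nat -> R) (N : nat) (f : R -> R)
    (x : R) (n : nat) (A : set R) : Prop :=
  is_atom c N f n A /\ exists t : nat, A (iter (t + n) f x).

Definition lr_visited {R : realType} (c : nat -> R) (N : nat) (f : R -> R)
    (x : R) (n k : nat) : Prop :=
  exists A : set R, [/\ atom_of_orbit c N f x n A, A (c k),
    (exists t : nat, A (iter (t + n) f x) /\ piece c N k.-1 (iter (t + n) f x)) &
    (exists t' : nat, A (iter (t' + n) f x) /\ piece c N k (iter (t' + n) f x))].

Definition card_Delta_lr {R : realType} (c : nat -> R) (N : nat) (f : R -> R)
    (x : R) : nat :=
  #|[set k : 'I_N | (0 < k)%N &&
      `[< forall n : nat, (0 < n)%N -> lr_visited c N f x n k >]]|.

(* The complexity grows by p(n+1) = p(n) + d(n), where d(n) sums, over the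
   words u of length n, the number of letters that can follow u in theta,
   minus one.  By the separation property the atoms of generation n are
   pairwise disjoint intervals, and f^(t+n)(x) lies in the atom of u exactly
   when u is the word theta_t ... theta_(t+n-1).  So two followers j < k of u
   put the cut c_k inside the atom of u, whence d(n) <= #Delta; conversely each
   cut of Delta^n_lr(x) is such a pair, whence #Delta^n_lr(x) <= d(n).  Atoms
   of generation n have length at most lambda^n |X|; once this is below the
   smallest gap between cuts, the followers of u are consecutive pieces and
   d(n) = #Delta^n_lr(x).  Since Delta^n_lr(x) decreases in n it is eventually
   Delta_lr(x), so d(n) = #Delta_lr(x) for large n, and summing d gives the
   affine formula together with the two bounds on beta. *)

From HB Require Import structures.
From mathcomp Require Import all_boot all_order all_algebra.
From mathcomp Require Import all_classical all_reals all_analysis.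
From mathcomp Require Import lra zify.
Import Order.TTheory GRing.Theory Num.Theory.
Import numFieldNormedType.Exports.
Local Open Scope ring_scope.

Lemma card_bigcup_disjoint (I T : finType) (F : I -> {set T}) :
  (forall i j x, x \in F i -> x \in F j -> i = j) ->
  #|\bigcup_i F i| = (\sum_i #|F i|)%N.
Proof.
move=> F_inj; rewrite -sum1_card partition_disjoint_bigcup.
  by under eq_bigr do rewrite sum1_card.
move=> i j; apply: contraNT; rewrite -setI_eq0 => /set0Pn [x].
by rewrite inE => /andP [xi xj]; rewrite (F_inj _ _ _ xi xj).
Qed.

Lemma card_ord_gt0 (N : nat) : #|[set k : 'I_N | (0 < k)%N]| = N.-1.
Proof.
case: N => [|N]; first by apply/eqP; rewrite cards_eq0; apply/eqP/setP => -[].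
rewrite -[in RHS](card_ord N.+1) -(cardsC1 ord0); apply: eq_card => k.
by rewrite !inE lt0n.
Qed.

Definition nonminimal {N : nat} (S : {set 'I_N}) : {set 'I_N} :=
  [set k in S | [exists j in S, (j < k)%N]].

Lemma card_nonminimal (N : nat) (S : {set 'I_N}) : #|nonminimal S| = #|S|.-1.
Proof.
have [->|[i0 i0S]] := set_0Vmem S.
  rewrite cards0; apply/eqP; rewrite cards_eq0; apply/eqP/setP => k.
  by rewrite !inE.
have [a aS amin] := arg_minnP (fun k : 'I_N => val k) i0S.
have {}aS : a \in S := aS.
rewrite (cardsD1 a S) aS /=; apply: eq_card => k; rewrite !inE.
case kS: (k \in S); rewrite ?andbF ?andbT //.
apply/existsP/idP => [[j /andP [jS jk]]|ka].
  by apply: contraTneq jk => ->; rewrite -leqNgt amin.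
exists a; rewrite aS ltn_neqAle amin // andbT.
by rewrite eq_sym.
Qed.

Section Words.
Context {N : nat} (theta : nat -> 'I_N).

Definition factor (n t : nat) : seq 'I_N := mkseq (fun j => theta (t + j)%N) n.

Definition language (n : nat) : {set n.-tuple 'I_N} :=
  [set w : n.-tuple 'I_N | `[< exists t, factor n t = w >]].

Definition followers (n : nat) (u : seq 'I_N) : {set 'I_N} :=
  [set i | `[< exists t, factor n t = u /\ theta (t + n)%N = i >]].

Definition complexity_increment (n : nat) : nat :=
  \sum_(u : n.-tuple 'I_N) (#|followers n u|).-1.

Lemma factorS n t : factor n.+1 t = rcons (factor n t) (theta (t + n)%N).
Proof. exact: mkseqS. Qed.

Lemma factor_tupleP n t (w : n.-tuple 'I_N) :
  (forall j : 'I_n, theta (t + j)%N = tnth w j) <-> factor n t = w.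
Proof.
split=> [Hw|fw j]; last by rewrite (tnth_nth (theta 0%N)) -fw nth_mkseq.
apply: (@eq_from_nth _ (theta 0%N)); first by rewrite size_mkseq size_tuple.
move=> j; rewrite size_mkseq => jn.
by rewrite nth_mkseq // (Hw (Ordinal jn)) (tnth_nth (theta 0%N)).
Qed.

Lemma complexityE n : complexity N theta n = #|language n|.
Proof.
apply: eq_card => w; rewrite [in RHS]inE.
apply/idP/asboolP => [/set_mem/asboolP [t tw]|[t tw]].
  by exists t; apply/factor_tupleP.
by apply/mem_set/asboolP; exists t; apply/factor_tupleP.
Qed.

Lemma card_followers_gt0 n (u : n.-tuple 'I_N) :
  (0 < #|followers n u|)%N = (u \in language n).
Proof.
rewrite inE; apply/card_gt0P/asboolP => [[i]|[t tu]].
  by rewrite inE => /asboolP [t [tu _]]; exists t.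
by exists (theta (t + n)%N); rewrite inE; apply/asboolP; exists t.
Qed.

Lemma card_language_succ n :
  #|language n.+1| = (\sum_(u : n.-tuple 'I_N) #|followers n u|)%N.
Proof.
pose ext (p : n.-tuple 'I_N * 'I_N) := [tuple of rcons p.1 p.2].
have ext_inj : injective ext.
  by move=> [u i] [v j] /(congr1 val) /rcons_inj [/val_inj -> ->].
have -> : language n.+1 =
    ext @: [set p : n.-tuple 'I_N * 'I_N | p.2 \in followers n p.1].
  apply/setP => w; rewrite inE; apply/asboolP/imsetP => [[t tw]|].
    have tsz : size (factor n t) == n by rewrite size_mkseq.
    exists (@Tuple n _ _ tsz, theta (t + n)%N).
      by rewrite !inE; exists t.
    by apply: val_inj; rewrite /= -tw factorS.
  move=> [[u i]]; rewrite !inE => -[t [tu ti]] ->.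
  by exists t; rewrite factorS tu ti.
rewrite card_imset //.
transitivity (\sum_(u : n.-tuple 'I_N) \sum_(i in followers n u) 1)%N.
  by rewrite pair_big_dep -sum1_card; apply: eq_bigl => p; rewrite inE.
by apply: eq_bigr => u _; rewrite sum1_card.
Qed.

Lemma complexity_succ n :
  complexity N theta n.+1 = (complexity N theta n + complexity_increment n)%N.
Proof.
rewrite !complexityE card_language_succ -sum1_card [X in (X + _)%N]big_mkcond.
rewrite -big_split /=.
apply: eq_bigr => u _; rewrite -card_followers_gt0.
by case: #|followers n u|.
Qed.

End Words.

Local Open Scope classical_set_scope.

Lemma decreasing_sets_eventually_cap (T : finType) (D : nat -> {set T}) :
  (forall n, D n.+1 \subset D n) ->
  \forall n \near \oo, D n = [set k | `[< forall m, k \in D m >]]%SET.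
Proof.
move=> DS.
have Dmono m n : (m <= n)%N -> D n \subset D m.
  move=> /subnK <-; elim: (n - m)%N => [|k IH] //.
  exact: fintype.subset_trans (DS _) IH.
pose has_card k := `[< exists n, #|D n| = k >].
have has_card0 : exists k, has_card k.
  by exists #|D 0%N|; apply/asboolP; exists 0%N.
have [k /asboolP [n0 Dn0] kmin] := ex_minnP has_card0.
have Dn0E n : (n0 <= n)%N -> D n = D n0.
  move=> n0n; apply/eqP; rewrite eqEcard Dmono // Dn0 kmin //.
  by apply/asboolP; exists n.
exists n0 => // n /= n0n; rewrite Dn0E //; apply/setP => a; rewrite inE.
apply/idP/asboolP => [aD m|]; last exact.
have [mn0|n0m] := leqP m n0; first exact: fintype.subsetP (Dmono _ _ mn0) _ aD.
by rewrite Dn0E // ltnW.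
Qed.

Lemma eventually_affine (p d : nat -> nat) (L M : nat) :
  (forall n, p n.+1 = p n + d n)%N ->
  (forall n, 0 < n -> L <= d n <= M)%N ->
  (\forall n \near \oo, d n = L) ->
  exists m0 : nat, (1 <= m0)%N /\
    exists beta : int,
      [/\ forall n, (m0 <= n)%N -> (p n)%:Z = (n * L)%:Z + beta,
          (p 1%N)%:Z - L%:Z <= beta &
          beta <= (p 1%N)%:Z - M%:Z + m0%:Z * (M%:Z - L%:Z)].
Proof.
move=> pS dLM [n0 _ dL]; set m0 := n0.+1.
have p_affine k : p (k + m0)%N = (p m0 + k * L)%N.
  elim: k => [|k IH]; first by rewrite add0n mul0n addn0.
  by rewrite addSn pS IH (dL (k + m0)%N) /= /m0; lia.
have p_bounds k : (p 1%N + k * L <= p k.+1 <= p 1%N + k * M)%N.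
  elim: k => [|k IH]; first by rewrite !mul0n !addn0 leqnn.
  have /andP [Ld dM] := dLM k.+1 isT; move: IH => /andP [lo hi].
  by rewrite [p k.+2]pS !mulSn; apply/andP; split; lia.
exists m0; split => //; exists ((p m0)%:Z - (m0 * L)%:Z); split.
- by move=> n /subnK <-; move: (n - m0)%N => k; rewrite p_affine mulnDl; lia.
- by have /andP [lo _] := p_bounds n0; rewrite /m0; nia.
- by have /andP [_ hi] := p_bounds n0; rewrite /m0; nia.
Qed.

Lemma closure_dist_le (R : realType) (S : set R) (d : R) :
  (forall y z, S y -> S z -> `|y - z| <= d) ->
  forall y z, closure S y -> closure S z -> `|y - z| <= d.
Proof.
move=> Sd y z Sy Sz; apply/ler_addgt0Pr => e e0.
have e2 : 0 < e / 2 by rewrite divr_gt0.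
have [a [Sa ya]] := Sy _ (nbhsx_ballx y _ e2).
have [b [Sb zb]] := Sz _ (nbhsx_ballx z _ e2).
move: ya zb; rewrite /ball /= => ya zb.
have := Sd a b Sa Sb; have := ler_distD a y z; have := ler_distD b a z.
rewrite (distrC z b) in zb; lra.
Qed.

Section PiecewiseContractingMap.
Variables (R : realType) (N : nat) (c : nat -> R) (f : R -> R).
Variables (fi : 'I_N -> R -> R) (lam : R).
Hypothesis c_incr : forall k, (k < N)%N -> c k < c k.+1.
Hypothesis f_maps_X : forall y, Xspace c N y -> Xspace c N (f y).
Hypothesis fi_ext : forall i, is_cont_ext c N f i (fi i).
Hypothesis fi_inj : forall (i : 'I_N) y z,
  `[c i, c i.+1] y -> `[c i, c i.+1] z -> fi i y = fi i z -> y = z.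
Hypothesis fi_disj : forall i j : 'I_N, i != j ->
  fi i @` `[c i, c i.+1] `&` fi j @` `[c j, c j.+1] = set0.
Hypothesis lam_ge0 : 0 <= lam.
Hypothesis lam_lt1 : lam < 1.
Hypothesis f_contracting : forall (i : 'I_N) y z,
  piece c N i y -> piece c N i z -> `|f y - f z| <= lam * `|y - z|.

Lemma cut_le {i j : nat} : (i <= j)%N -> (j <= N)%N -> c i <= c j.
Proof.
move=> /subnK <-; elim: (j - i)%N => [|k IH] //; rewrite addSn => kiN.
apply: (le_trans (IH (ltnW kiN))); exact/ltW/c_incr.
Qed.

Lemma piece_sub_segment i y : piece c N i y -> c i <= y <= c i.+1.
Proof.
move=> [lo hi]; apply/andP; split.
  by move: lo; case: ifP => [/eqP -> //|_ /ltW].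
by move: hi; case: ifP => [/eqP -> //|_ /ltW].
Qed.

Lemma piece_lt_cut {i : nat} {y : R} :
  (i.+1 < N)%N -> piece c N i y -> y < c i.+1.
Proof. by move=> iN [_]; rewrite ifF //; apply/negbTE; rewrite neq_ltn iN. Qed.

Lemma cut_lt_piece {i : nat} {y : R} : (0 < i)%N -> piece c N i y -> c i < y.
Proof. by move=> i0 [+ _]; rewrite ifF //; apply/negbTE; rewrite -lt0n. Qed.

Lemma piece_is_interval i : is_interval (piece c N i).
Proof.
move=> y z [y1 _] [_ z2] v /andP [yv vz]; split.
  by move: y1; case: ifP => _ h; [exact: le_trans yv|exact: lt_le_trans yv].
by move: z2; case: ifP => _ h; [exact: le_trans h|exact: le_lt_trans h].
Qed.

Lemma cut_between_pieces {j k : 'I_N} {y z : R} : (j < k)%N ->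
  piece c N j y -> piece c N k z -> y < c k < z.
Proof.
move=> jk Py Pz; rewrite (cut_lt_piece (leq_ltn_trans (leq0n j) jk) Pz) andbT.
apply: lt_le_trans (piece_lt_cut (leq_ltn_trans jk (ltn_ord k)) Py) _.
exact: cut_le jk (ltnW (ltn_ord k)).
Qed.

Lemma piece_disjoint (i j : 'I_N) y : piece c N i y -> piece c N j y -> i = j.
Proof.
wlog ij : i j / (i <= j)%N => [H Pi Pj|Pi Pj].
  by case/orP: (leq_total i j) => h; [|apply/esym]; apply: H.
apply/val_inj/eqP; rewrite eqn_leq ij leqNgt /=; apply/negP => lt.
have /andP [yc cy] := cut_between_pieces lt Pi Pj.
by have := lt_trans yc cy; rewrite ltxx.
Qed.

Lemma cut_in_interval (A : set R) (j k : 'I_N) y z : is_interval A ->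
  (j < k)%N -> A y -> piece c N j y -> A z -> piece c N k z -> A (c k).
Proof.
move=> iA jk Ay Py Az Pz; apply: iA Ay Az _ _.
by have /andP [yc cz] := cut_between_pieces jk Py Pz; rewrite !ltW.
Qed.

Lemma pieces_apart {j k : 'I_N} {y z : R} : (j.+1 < k)%N ->
  piece c N j y -> piece c N k z -> c j.+2 - c j.+1 < z - y.
Proof.
move=> jk Py Pz; have kN := ltn_ord k.
have yc := piece_lt_cut (ltn_trans jk kN) Py.
have cz := cut_lt_piece (leq_ltn_trans (leq0n _) jk) Pz.
have := cut_le jk (ltnW kN); lra.
Qed.

Local Notation atom := (atom c N f).

Lemma atom_rcons w i : atom (rcons w i) = Fop c N f i (atom w).
Proof. by rewrite /atom foldl_rcons. Qed.

Lemma atom_closed w : closed (atom w).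
Proof.
elim/last_ind: w => [|w i _]; first exact: interval_closed.
by rewrite atom_rcons; exact: closed_closure.
Qed.

Lemma atom_is_interval w : is_interval (atom w).
Proof.
elim/last_ind: w => [|w i IH]; first exact: interval_is_interval.
rewrite atom_rcons; apply/connected_intervalP/connected_closure.
have -> : f @` (atom w `&` piece c N i) = fi i @` (atom w `&` piece c N i).
  by apply: eq_imagel => y [_ Py]; rewrite (fi_ext i).2.
apply: connected_continuous_connected.
  apply/connected_intervalP => y z [Ay Py] [Az Pz] v yvz.
  by split; [exact: IH Ay Az _ yvz|exact: piece_is_interval Py Pz _ yvz].
apply: continuous_subspaceW (fi_ext i).1 => y [_ /piece_sub_segment].
by rewrite /= in_itv.
Qed.

Lemma atom_cons i w : atom (i :: w) `<=` atom w.
Proof.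
have FX : Fop c N f i (Xspace c N) `<=` Xspace c N.
  rewrite [X in _ `<=` X](closure_id _).1; last exact: interval_closed.
  by apply: closure_subset => _ [y [Xy _] <-]; exact: f_maps_X.
rewrite /atom /=; set A := Fop c N f i _ in FX *; clearbody A.
elim: w A (Xspace c N) FX => [|j w IH] A B AB //=; apply: IH.
apply: closure_subset => _ [y [Ay Py] <-]; exists y => //.
by split => //; exact: AB.
Qed.

Lemma Fop_sub_image {i : 'I_N} {A : set R} : closed A ->
  Fop c N f i A `<=` fi i @` (A `&` `[c i, c i.+1]).
Proof.
move=> cA; have seg := @segment_compact R (c i) (c i.+1).
have cpt : compact (fi i @` (A `&` `[c i, c i.+1])).
  apply: continuous_compact; last by rewrite setIC; exact: compact_closedI.
  exact: continuous_subspaceW (@subIsetr _ _ _) (fi_ext i).1.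
rewrite [X in _ `<=` X](closure_id _).1; last exact: compact_closed.
apply: closure_subset => _ [y [Ay Py] <-]; exists y; last exact: (fi_ext i).2.
by split => //=; rewrite in_itv; exact: piece_sub_segment Py.
Qed.

Lemma atom_disjoint (u v : seq 'I_N) y : size u = size v ->
  atom u y -> atom v y -> u = v.
Proof.
elim/last_ind: u v y => [|u i IH] v y; elim/last_ind: v => [|v j _] //;
  rewrite ?size_rcons // => /eqP; rewrite eqSS => /eqP uv; rewrite !atom_rcons.
move=> /(Fop_sub_image (atom_closed _)) [a [Aa Ia] <-].
move=> /(Fop_sub_image (atom_closed _)) [b [Ab Ib] ab].
have [ij|ij] := eqVneq i j; last first.
  have := fi_disj _ _ ij; rewrite -subset0 => /(_ (fi i a)); case.
  by split; [exists a|exists b].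
subst j; have ba := fi_inj _ _ _ Ib Ia ab; subst b.
by rewrite (IH v a uv Aa Ab).
Qed.

Lemma atom_dist_le {w : seq 'I_N} {y z : R} : atom w y -> atom w z ->
  `|y - z| <= (c N - c 0) * lam ^+ size w.
Proof.
elim/last_ind: w y z => [|w i IH] y z.
  rewrite /atom /= /Xspace /= !in_itv /= expr0 mulr1.
  move=> /andP [y1 y2] /andP [z1 z2].
  by rewrite ler_norml; apply/andP; split; lra.
rewrite atom_rcons size_rcons exprSr mulrA; apply: closure_dist_le.
move=> _ _ [a [Aa Pa] <-] [b [Ab Pb] <-].
apply: le_trans (f_contracting _ _ _ Pa Pb) _.
by rewrite [leRHS]mulrC; exact: ler_wpM2l (IH _ _ Aa Ab).
Qed.

Variables (x : R) (theta : nat -> 'I_N).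
Hypothesis x_tilde : in_Xtilde c N f x.
Hypothesis x_itinerary : is_itinerary c N f x theta.

Definition cuts_in (A : set R) : {set 'I_N} :=
  [set k : 'I_N | (0 < k)%N && `[< A (c k) >]]%SET.

Definition lr_visited_set (n : nat) : {set 'I_N} :=
  [set k : 'I_N | (0 < k)%N && `[< lr_visited c N f x n k >]]%SET.

Lemma factor_atom n t : atom (factor theta n t) (iter (t + n) f x).
Proof.
elim: n => [|n IH]; first by rewrite addn0; exact: (x_tilde t).1.
rewrite factorS atom_rcons addnS iterS; apply: subset_closure.
by exists (iter (t + n) f x) => //; split => //; exact: x_itinerary.
Qed.

Lemma followersP {n : nat} {u : seq 'I_N} {i : 'I_N} : size u = n ->
  i \in followers theta n u <->
  exists t, atom u (iter (t + n) f x) /\ piece c N i (iter (t + n) f x).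
Proof.
move=> un; rewrite inE; split => [/asboolP [t [tu ti]]|[t [Au Pi]]].
  by exists t; rewrite -tu -ti; split; [exact: factor_atom|exact: x_itinerary].
apply/asboolP; exists t; split.
  by apply: atom_disjoint (factor_atom n t) Au; rewrite size_mkseq un.
exact: piece_disjoint (x_itinerary (t + n)) Pi.
Qed.

Lemma cuts_in_atom_inj n (u v : n.-tuple 'I_N) k :
  k \in cuts_in (atom u) -> k \in cuts_in (atom v) -> u = v.
Proof.
rewrite !inE => /andP [_ /asboolP Au] /andP [_ /asboolP Av].
by apply: val_inj; apply: atom_disjoint Au Av; rewrite !size_tuple.
Qed.

Lemma card_setI_cuts_in_atoms n (B : {set 'I_N}) :
  #|B :&: (\bigcup_(u : n.-tuple 'I_N) cuts_in (atom u))%SET| =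
  (\sum_(u : n.-tuple 'I_N) #|B :&: cuts_in (atom u)|)%N.
Proof.
rewrite big_distrr /= card_bigcup_disjoint // => u v k.
by move=> /setIP [_ ku] /setIP [_ kv]; exact: cuts_in_atom_inj ku kv.
Qed.

Lemma nonminimal_followers_sub_cuts n (u : n.-tuple 'I_N) :
  nonminimal (followers theta n u) \subset cuts_in (atom u).
Proof.
apply/fintype.subsetP => k /setIdP [kS /existsP [j /andP [jS jk]]].
have [t [Aj Pj]] := (followersP (size_tuple u)).1 jS.
have [t' [Ak Pk]] := (followersP (size_tuple u)).1 kS.
rewrite inE (leq_ltn_trans (leq0n j) jk); apply/asboolP.
exact: cut_in_interval (atom_is_interval _) jk Aj Pj Ak Pk.
Qed.

Lemma complexity_increment_le n : (complexity_increment theta n <= N.-1)%N.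
Proof.
rewrite /complexity_increment -card_ord_gt0.
under eq_bigr do rewrite -card_nonminimal.
apply: (@leq_trans (\sum_(u : n.-tuple 'I_N) #|cuts_in (atom u)|)).
  by apply: leq_sum => u _; exact/subset_leq_card/nonminimal_followers_sub_cuts.
rewrite -card_bigcup_disjoint; last exact: cuts_in_atom_inj.
apply/subset_leq_card/bigcupsP => u _; apply/fintype.subsetP => k.
by rewrite !inE => /andP [].
Qed.

Lemma lr_visited_set_succ n : lr_visited_set n.+1 \subset lr_visited_set n.
Proof.
apply/fintype.subsetP => k; rewrite !inE => /andP [k0 /asboolP vis].
rewrite k0 /=.
move: vis => [A [[[w [Aw _]] [t0 At0]] Ack [t [At Pt]] [t' [At' Pt']]]].
case: w Aw => [[|i s] //= sz] Aw.
have sub : A `<=` atom s by rewrite -Aw; exact: atom_cons.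
apply/asboolP; exists (atom s); split.
- split; last by exists t0.+1; rewrite addSnnS; exact: sub.
  exists (@Tuple n _ s sz); split => //.
  by exists (iter (t0 + n.+1) f x); exact: sub.
- exact: sub.
- by exists t.+1; rewrite addSnnS; split => //; exact: sub.
- by exists t'.+1; rewrite addSnnS; split => //; exact: sub.
Qed.

Lemma lr_visited_set_cover n :
  lr_visited_set n \subset (\bigcup_(u : n.-tuple 'I_N) cuts_in (atom u))%SET.
Proof.
apply/fintype.subsetP => k; rewrite inE => /andP [k0 /asboolP [A]].
move=> [[[w [<- _]] _] Ack _ _]; apply/bigcupP; exists w => //.
by rewrite inE k0; apply/asboolP.
Qed.

Lemma lr_cuts_sub_nonminimal n (u : n.-tuple 'I_N) :
  lr_visited_set n :&: cuts_in (atom u) \subset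
    nonminimal (followers theta n u).
Proof.
apply/fintype.subsetP => k /setIP [].
rewrite [k \in lr_visited_set n]inE [k \in cuts_in _]inE.
move=> /andP [k0 /asboolP [A [[[w [<- _]] _] Awk [t [At Pt]] [t' [At' Pt']]]]].
move=> /andP [_ /asboolP Auk].
have wu : w = u.
  by apply: val_inj; apply: atom_disjoint Awk Auk; rewrite !size_tuple.
subst w; pose j := Ordinal (leq_ltn_trans (leq_pred k) (ltn_ord k)).
have kS : k \in followers theta n u.
  by apply/(followersP (size_tuple u)); exists t'.
have jS : j \in followers theta n u.
  by apply/(followersP (size_tuple u)); exists t.
rewrite inE kS; apply/existsP; exists j; rewrite jS /=.
by rewrite prednK.
Qed.

Lemma nonminimal_followers_sub_lr n (u : n.-tuple 'I_N) :
  (forall m : 'I_N, (c N - c 0) * lam ^+ n <= c m.+1 - c m) ->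
  nonminimal (followers theta n u) \subset lr_visited_set n.
Proof.
move=> small; apply/fintype.subsetP => k k_nonmin.
have /(fintype.subsetP (nonminimal_followers_sub_cuts _ u)) := k_nonmin.
rewrite inE => /andP [k0 /asboolP Auk].
move: k_nonmin => /setIdP [kS /existsP [j /andP [jS jk]]].
have [t [Aj Pj]] := (followersP (size_tuple u)).1 jS.
have [t' [Ak Pk]] := (followersP (size_tuple u)).1 kS.
(* Otherwise a whole piece would lie between the two orbit points, and that
   piece is longer than the atom containing them. *)
have kj : k.-1 = j.
  apply/eqP; rewrite -eqSS prednK // eqn_leq jk andbT leqNgt; apply/negP => jk2.
  have := pieces_apart jk2 Pj Pk.
  have := small (Ordinal (ltn_trans jk2 (ltn_ord k))).
  have := atom_dist_le Ak Aj; rewrite size_tuple ler_norml => /andP [_ ?]; lra.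
rewrite inE k0; apply/asboolP; exists (atom u); split => //.
- by split; [exists u; split => //; exists (iter (t + n) f x)|exists t].
- by exists t; rewrite kj.
- by exists t'.
Qed.

Lemma card_lr_visited_le_increment n :
  (#|lr_visited_set n| <= complexity_increment theta n)%N.
Proof.
rewrite -(finset.setIidPl (lr_visited_set_cover n)) card_setI_cuts_in_atoms.
apply: leq_sum => u _; rewrite -card_nonminimal.
exact/subset_leq_card/lr_cuts_sub_nonminimal.
Qed.

Lemma increment_le_card_lr_visited n :
  (forall m : 'I_N, (c N - c 0) * lam ^+ n <= c m.+1 - c m) ->
  (complexity_increment theta n <= #|lr_visited_set n|)%N.
Proof.
move=> small; rewrite /complexity_increment.
apply: (@leq_trans
  (\sum_(u : n.-tuple 'I_N) #|lr_visited_set n :&: cuts_in (atom u)|)).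
  apply: leq_sum => u _.
  rewrite -card_nonminimal subset_leq_card // finset.subsetI.
  by rewrite nonminimal_followers_sub_lr // nonminimal_followers_sub_cuts.
by rewrite -card_setI_cuts_in_atoms subset_leq_card // finset.subsetIl.
Qed.

Lemma atoms_eventually_small : \forall n \near \oo,
  forall m : 'I_N, (c N - c 0) * lam ^+ n <= c m.+1 - c m.
Proof.
apply: filter_forall => m.
have gap : 0 < c m.+1 - c m by rewrite subr_gt0 c_incr.
have lam_norm : `|lam| < 1 by rewrite ger0_norm.
have geo := cvgr0_norm_le _ (cvg_geometric (c N - c 0) lam_norm) _ gap.
apply: filterS (geo _) => n; exact: le_trans (ler_norm _).
Qed.

Lemma card_Delta_lr_le n : (0 < n)%N ->
  (card_Delta_lr c N f x <= #|lr_visited_set n|)%N.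
Proof.
move=> n0; apply: subset_leq_card; apply/fintype.subsetP => k.
move=> /set_mem /andP [k0 /asboolP vis].
by rewrite inE k0; apply/asboolP; exact: vis.
Qed.

Lemma lr_visited_set_eventually : \forall n \near \oo,
  #|lr_visited_set n| = card_Delta_lr c N f x.
Proof.
have cap :=
  @decreasing_sets_eventually_cap _ lr_visited_set lr_visited_set_succ.
apply: filterS cap => n ->.
apply: eq_card => k; rewrite inE; apply/asboolP/idP => [vis|].
  have := vis 1%N; rewrite inE => /andP [k0 _].
  apply/mem_set/andP; split => //; apply/asboolP => m _.
  by have := vis m; rewrite inE => /andP [_ /asboolP].
move=> /set_mem /andP [k0 /asboolP vis] [|m]; last first.
  by rewrite inE k0; apply/asboolP; exact: vis.
apply: (fintype.subsetP (lr_visited_set_succ 0)).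
by rewrite inE k0; apply/asboolP; exact: vis.
Qed.

Lemma increment_eventually_card_Delta_lr : \forall n \near \oo,
  complexity_increment theta n = card_Delta_lr c N f x.
Proof.
near=> n; apply/eqP; rewrite eqn_leq; apply/andP; split.
  have <- : #|lr_visited_set n| = card_Delta_lr c N f x.
    by near: n; exact: lr_visited_set_eventually.
  apply: increment_le_card_lr_visited.
  by near: n; exact: atoms_eventually_small.
apply: leq_trans (card_lr_visited_le_increment n).
by apply: card_Delta_lr_le; near: n; exists 1%N.
Unshelve. all: by end_near.
Qed.

End PiecewiseContractingMap.

Theorem theorem2 (R : realType) (N : nat) (c : nat -> R) (f : R -> R)
    (x : R) (theta : nat -> 'I_N) :
  (2 <= N)%N ->
  (forall k : nat, (k < N)%N -> c k < c k.+1) ->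
  piecewise_contracting c N f ->
  separation c N f ->
  in_Xtilde c N f x ->
  is_itinerary c N f x theta ->
  exists m0 : nat, (1 <= m0)%N /\
    exists beta : int,
      [/\ (forall n : nat, (m0 <= n)%N ->
             (complexity N theta n)%:Z = (n * card_Delta_lr c N f x)%:Z + beta),
           (complexity N theta 1)%:Z - (card_Delta_lr c N f x)%:Z <= beta &
           beta <= (complexity N theta 1)%:Z - (N.-1)%:Z
                   + m0%:Z * ((N.-1)%:Z - (card_Delta_lr c N f x)%:Z)].
Proof.
move=> _ c_incr [f_maps_X _ [lam [lam_gt0 lam_lt1 f_contracting]]].
move=> [fi [fi_ext fi_inj fi_disj]] x_tilde x_itinerary.
have lam_ge0 := ltW lam_gt0.
apply: (@eventually_affine (complexity N theta) (complexity_increment theta)).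
- exact: complexity_succ.
- move=> n n_gt0; apply/andP; split.
    eapply leq_trans; first by eapply card_Delta_lr_le; eassumption.
    by eapply card_lr_visited_le_increment; eassumption.
  by eapply complexity_increment_le; eassumption.
- by eapply increment_eventually_card_Delta_lr; eassumption.
Qed.
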